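(* Let $\{M_i\mid i\in I\}$ be a collection of monoids. Then the monoid free product $F=\prod_1^{*}\{M_i\mid i\in I\}$ is finitely right equated if and only if each $M_i$ ($i\in I$) is finitely right equated.
   Context: For a semigroup $S$ and $a\in S$, $\mathbf{r}_S(a)=\{(s,t)\in S\times S\mid as=at\}$ is the right annihilator congruence of $a$. $S$ is finitely right equated (FRE) if each $\mathbf{r}_S(a)$ is finitely generated as a right congruence, i.e. equals the smallest right congruence containing some finite subset. For pairwise disjoint monoids $M_i$ with identities $1_i$, the monoid free product is the quotient of the semigroup free product $\prod^{*}\{M_i\}$ (sequences $s_1*\dots*s_n$ with $s_j\in\bigsqcup M_i$, consecutive entries from different factors, multiplied by concatenation and multiplying adjacent entries from the same factor) by the congruence generated by $\{(1_i,1_j)\mid i,j\in I\}$. *)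

From Stdlib Require Import List Classical ClassicalEpsilon.
Import ListNotations.
Set Implicit Arguments.

Definition right_congruence (T : Type) (op : T -> T -> T) (R : T -> T -> Prop) : Prop :=
  (forall s, R s s) /\ (forall s t, R s t -> R t s) /\
  (forall s t u, R s t -> R t u -> R s u) /\
  (forall s t u, R s t -> R (op s u) (op t u)).

Definition right_cong_gen (T : Type) (op : T -> T -> T) (X : list (T * T)) (s t : T) : Prop :=
  forall R, right_congruence op R -> (forall p, In p X -> R (fst p) (snd p)) -> R s t.

Definition r_ann (T : Type) (op : T -> T -> T) (a s t : T) : Prop := op a s = op a t.

Definition FRE (T : Type) (op : T -> T -> T) : Prop :=
  forall a : T, exists X : list (T * T),
    forall s t, r_ann op a s t <-> right_cong_gen op X s t.

Record Monoid := {
  Mcar :> Type;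
  Mop : Mcar -> Mcar -> Mcar;
  Mone : Mcar;
  Massoc : forall x y z, Mop x (Mop y z) = Mop (Mop x y) z;
  Mone_l : forall x, Mop Mone x = x;
  Mone_r : forall x, Mop x Mone = x
}.

Section FreeProduct.
Variable I : Type.
Variable M : I -> Monoid.

Definition letter := { i : I & Mcar (M i) }.

Definition tag (x : letter) : I := projT1 x.

Fixpoint alt (l : list letter) : Prop :=
  match l with
  | x :: ((y :: _) as t) => tag x <> tag y /\ alt t
  | _ => True
  end.

Definition join (x y : letter) (v : list letter) : list letter :=
  match excluded_middle_informative (projT1 x = projT1 y) with
  | left e =>
      existT _ (projT1 x)
        (Mop (M (projT1 x)) (projT2 x)
           (eq_rect_r (fun k => Mcar (M k)) (projT2 y) e)) :: v
  | right _ => x :: y :: v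
  end.

Fixpoint mulw (u v : list letter) : list letter :=
  match u with
  | nil => v
  | x :: u' =>
      match u' with
      | nil => match v with nil => [x] | y :: v' => join x y v' end
      | _ :: _ => x :: mulw u' v
      end
  end.

Lemma mulw_head (x : letter) (u v : list letter) :
  exists w, mulw (x :: u) v = existT _ (projT1 x) (projT2 x) :: w \/
            (exists m, mulw (x :: u) v = existT _ (projT1 x) m :: w).
Proof.
  destruct u as [|z u].
  - destruct v as [|y v].
    + exists nil. left. destruct x; reflexivity.
    + unfold mulw, join. destruct (excluded_middle_informative (projT1 x = projT1 y)).
      * exists v. right. eexists. reflexivity.
      * exists (y :: v). left. destruct x; reflexivity.
  - exists (mulw (z :: u) v). left. destruct x; reflexivity.
Qed.

Lemma mulw_tag (x : letter) (u v : list letter) :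
  exists x' w, mulw (x :: u) v = x' :: w /\ tag x' = tag x.
Proof.
  destruct (mulw_head x u v) as [w [H | [m H]]]; rewrite H; eauto.
Qed.

Lemma alt_cons (x : letter) l : alt (x :: l) -> alt l.
Proof. destruct l; simpl; tauto. Qed.

Lemma mulw_alt (u v : list letter) : alt u -> alt v -> alt (mulw u v).
Proof.
  induction u as [|x u IH]; intros Hu Hv; [exact Hv|].
  destruct u as [|z u].
  - destruct v as [|y v]; [exact Logic.I|].
    unfold mulw, join. destruct (excluded_middle_informative (projT1 x = projT1 y)) as [e|n].
    + destruct v as [|y' v]; [exact Logic.I|].
      destruct Hv as [Hyy Hv]. split; [|exact Hv].
      unfold tag in *. cbn. rewrite e. exact Hyy.
    + split; [exact n| exact Hv].
  - change (alt (x :: mulw (z :: u) v)).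
    destruct Hu as [Hxz Hu].
    specialize (IH Hu Hv).
    destruct (mulw_tag z u v) as [x' [w [Hw Ht]]].
    rewrite Hw in IH |- *. split; [congruence|exact IH].
Qed.

Lemma mulw_nonnil (u v : list letter) : u <> nil -> mulw u v <> nil.
Proof.
  destruct u as [|x u]; [congruence|]. intros _.
  destruct (mulw_tag x u v) as [x' [w [H _]]]. rewrite H. discriminate.
Qed.

Definition SFP := { w : list letter | w <> nil /\ alt w }.

Definition sfp_mul (a b : SFP) : SFP :=
  exist _ (mulw (proj1_sig a) (proj1_sig b))
    (conj (mulw_nonnil _ (proj1 (proj2_sig a)))
          (@mulw_alt _ _ (proj2 (proj2_sig a)) (proj2 (proj2_sig b)))).

Lemma single_ok (x : letter) : [x] <> nil /\ alt [x].
Proof. split; [discriminate | exact Logic.I]. Qed.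

Definition unit_word (i : I) : SFP :=
  exist _ [existT _ i (Mone (M i))] (single_ok (existT _ i (Mone (M i)))).

Definition congruence (R : SFP -> SFP -> Prop) : Prop :=
  (forall s, R s s) /\ (forall s t, R s t -> R t s) /\
  (forall s t u, R s t -> R t u -> R s u) /\
  (forall s t u, R s t -> R (sfp_mul s u) (sfp_mul t u) /\ R (sfp_mul u s) (sfp_mul u t)).

Definition sigma (s t : SFP) : Prop :=
  forall R, congruence R -> (forall i j, R (unit_word i) (unit_word j)) -> R s t.

(** The monoid free product: the quotient SFP / sigma, as the type of sigma-classes. *)
Definition MFP := { P : SFP -> Prop | exists a, P = sigma a }.

Definition cls (a : SFP) : MFP := exist _ (sigma a) (ex_intro _ a eq_refl).

Definition rep (c : MFP) : SFP := proj1_sig (constructive_indefinite_description _ (proj2_sig c)).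

Definition mfp_mul (c d : MFP) : MFP := cls (sfp_mul (rep c) (rep d)).

End FreeProduct.

(* The monoid free product has unique normal forms: alternating words without
   identity letters, multiplied by letting a letter absorb the head of a word
   from the same factor.  Each [M i] is a retract of this monoid (inclusion,
   and projection onto the [i]-th coordinate), and FRE passes to retracts.
   Conversely, write a reduced word as [l * y] with [y] a letter of [M i].  If
   [y e = 1] in [M i], then [r(l y)] is generated by the image of [r(y)] in
   [M i] together with [e] times generators of [r(l)]; otherwise the letter
   [y s1] never cancels, so [l y s = l y t] forces [y s1 = y t1] on the
   [M i]-heads and equal tails, and the image of [r(y)] alone generates
   [r(l y)].  Induction along the word gives FRE. *)

From Stdlib Require Import List Classical ClassicalEpsilon.
From Stdlib Require Import FunctionalExtensionality PropExtensionality ProofIrrelevance.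
Import ListNotations.
Set Implicit Arguments.

Lemma sig_eq (A : Type) (P : A -> Prop) (u v : sig P) :
  proj1_sig u = proj1_sig v -> u = v.
Proof. destruct u, v; cbn; apply subset_eq_compat. Qed.

Definition hom (T T' : Type) (op : T -> T -> T) (op' : T' -> T' -> T') (f : T -> T') :=
  forall x y, f (op x y) = op' (f x) (f y).

Definition map_pairs (T T' : Type) (h : T -> T') (X : list (T * T)) : list (T' * T') :=
  map (fun p => (h (fst p), h (snd p))) X.

Definition fg_r_ann (T : Type) (op : T -> T -> T) (a : T) : Prop :=
  exists X, forall s t, r_ann op a s t <-> right_cong_gen op X s t.

Section RightCongruences.
Variables (T T' : Type) (op : T -> T -> T) (op' : T' -> T' -> T').

Lemma right_cong_gen_rc X : right_congruence op (right_cong_gen op X).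
Proof.
  repeat split.
  - intros s R [refl _] _; apply refl.
  - intros s t H R HR HX; apply (proj1 (proj2 HR)), H; assumption.
  - intros s t u H1 H2 R HR HX; apply (proj1 (proj2 (proj2 HR))) with t;
      [apply H1 | apply H2]; assumption.
  - intros s t u H R HR HX; apply (proj2 (proj2 (proj2 HR))), H; assumption.
Qed.

Lemma right_cong_gen_incl X1 X2 s t : (forall p, In p X1 -> In p X2) ->
  right_cong_gen op X1 s t -> right_cong_gen op X2 s t.
Proof. intros hX H R HR HX; apply H; auto. Qed.

(* [h] is a morphism of right acts along [phi]; this covers both semigroup
   morphisms ([phi = h]) and left translations ([phi = id]). *)
Lemma right_cong_gen_map (h phi : T -> T') X s t :
  (forall x u, h (op x u) = op' (h x) (phi u)) ->
  right_cong_gen op X s t -> right_cong_gen op' (map_pairs h X) (h s) (h t).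
Proof.
  intros hh H R [refl [sym [trans comp]]] HX.
  apply (H (fun a b => R (h a) (h b))).
  - repeat split; eauto. intros a b u hab; rewrite !hh; auto.
  - intros p hp; exact (HX _ (in_map (fun q => (h (fst q), h (snd q))) X p hp)).
Qed.

Hypothesis assoc : forall x y z, op x (op y z) = op (op x y) z.

Lemma r_ann_rc a : right_congruence op (r_ann op a).
Proof.
  unfold r_ann; repeat split; [congruence|congruence|].
  intros s t u h; rewrite !assoc, h; reflexivity.
Qed.

Lemma right_cong_gen_r_ann a X s t :
  (forall p, In p X -> r_ann op a (fst p) (snd p)) ->
  right_cong_gen op X s t -> r_ann op a s t.
Proof. intros hX h; exact (h _ (r_ann_rc a) hX). Qed.

End RightCongruences.

Lemma hom_inverse {T T' : Type} {op : T -> T -> T} {op' : T' -> T' -> T'}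
    {f : T -> T'} {g : T' -> T} :
  (forall x, g (f x) = x) -> (forall y, f (g y) = y) -> hom op op' f -> hom op' op g.
Proof. intros gf fg hf x y; rewrite <- (fg x), <- (fg y), <- hf, !gf; reflexivity. Qed.

Lemma FRE_of_iso {T T' : Type} {op : T -> T -> T} {op' : T' -> T' -> T'}
    {f : T -> T'} {g : T' -> T} :
  (forall x, g (f x) = x) -> (forall y, f (g y) = y) -> hom op op' f ->
  FRE op' -> FRE op.
Proof.
  intros gf fg hf F a.
  destruct (F (f a)) as [X HX]. exists (map_pairs g X). intros s t; split.
  - intros h. rewrite <- (gf s), <- (gf t).
    apply (right_cong_gen_map g g (hom_inverse gf fg hf)).
    apply HX; unfold r_ann in *; rewrite <- !hf, h; reflexivity.
  - intros h. apply (right_cong_gen_map f f hf) in h.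
    replace (map_pairs f (map_pairs g X)) with X in h.
    + apply HX in h. unfold r_ann in *. rewrite <- !hf in h.
      apply (f_equal g) in h; rewrite !gf in h; exact h.
    + unfold map_pairs; rewrite map_map, <- (map_id X) at 1.
      apply map_ext; intros [p q]; cbn; rewrite !fg; reflexivity.
Qed.

Lemma FRE_iso {T T' : Type} {op : T -> T -> T} {op' : T' -> T' -> T'}
    {f : T -> T'} {g : T' -> T} :
  (forall x, g (f x) = x) -> (forall y, f (g y) = y) -> hom op op' f ->
  FRE op <-> FRE op'.
Proof.
  intros gf fg hf; split; [apply (FRE_of_iso fg gf (hom_inverse gf fg hf))|].
  apply (FRE_of_iso gf fg hf).
Qed.

Lemma FRE_retract {T T0 : Type} {op : T -> T -> T} {op0 : T0 -> T0 -> T0}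
    {inj : T0 -> T} {pr : T -> T0} :
  (forall x y z, op0 x (op0 y z) = op0 (op0 x y) z) ->
  hom op0 op inj -> hom op op0 pr -> (forall x, pr (inj x) = x) ->
  FRE op -> FRE op0.
Proof.
  intros assoc hi hp pi F a. destruct (F (inj a)) as [X HX].
  exists (map_pairs pr X). intros s t; split.
  - intros h. rewrite <- (pi s), <- (pi t).
    apply (right_cong_gen_map pr pr hp).
    apply HX; unfold r_ann in *; rewrite <- !hi, h; reflexivity.
  - apply (right_cong_gen_r_ann assoc).
    intros p hin. apply in_map_iff in hin as [q [<- hq]]. cbn.
    assert (e : r_ann op (inj a) (fst q) (snd q)) by (apply HX; intros R _ HR; apply HR, hq).
    unfold r_ann in *. rewrite <- (pi a), <- !hp, e; reflexivity.
Qed.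

Section ReducedWords.
Variable I : Type.
Variable M : I -> Monoid.

Notation L := (letter M).
Notation mk i a := (existT (fun k => Mcar (M k)) i a).
Notation "1_ i" := (Mone (M i)) (at level 0, i at level 0).

(** * Reduced words *)

Definition coord (i : I) (x : L) : M i :=
  match excluded_middle_informative (projT1 x = i) with
  | left e => eq_rect _ (fun k => Mcar (M k)) (projT2 x) _ e
  | right _ => 1_i
  end.

Lemma coord_same i a : coord i (mk i a) = a.
Proof.
  unfold coord; cbn; destruct (excluded_middle_informative (i = i)) as [e|n].
  - rewrite (UIP_refl _ _ e); reflexivity.
  - contradiction.
Qed.

Lemma coord_diff i x : projT1 x <> i -> coord i x = 1_i.
Proof. unfold coord; destruct (excluded_middle_informative _); tauto. Qed.

Lemma coord_one i j : coord i (mk j 1_j) = 1_i.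
Proof.
  destruct (classic (j = i)) as [<-|n]; [apply coord_same|apply coord_diff; exact n].
Qed.

Lemma coord_mul i j a b :
  coord i (mk j (Mop (M j) a b)) = Mop (M i) (coord i (mk j a)) (coord i (mk j b)).
Proof.
  destruct (classic (j = i)) as [<-|n].
  - rewrite !coord_same; reflexivity.
  - rewrite !coord_diff by exact n; symmetry; apply Mone_l.
Qed.

Definition head_coord (i : I) (w : list L) : M i :=
  match w with z :: _ => coord i z | [] => 1_i end.

Definition strip (i : I) (w : list L) : list L :=
  match w with
  | z :: w' => if excluded_middle_informative (projT1 z = i) then w' else w
  | [] => []
  end.

Definition scons (i : I) (m : M i) (w : list L) : list L :=
  if excluded_middle_informative (m = 1_i) then w else mk i m :: w.

(* Meaningful on reduced words only: the letter absorbs the head of [w] when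
   both lie in the same factor, and vanishing letters are dropped. *)
Definition lmul (x : L) (w : list L) : list L :=
  scons (projT1 x) (Mop (M (projT1 x)) (projT2 x) (head_coord (projT1 x) w))
    (strip (projT1 x) w).

Definition starts_outside (i : I) (w : list L) : Prop :=
  match w with z :: _ => projT1 z <> i | [] => True end.

Definition reduced (w : list L) : Prop :=
  alt w /\ Forall (fun x => projT2 x <> 1_(projT1 x)) w.

Lemma reduced_nil : reduced [].
Proof. split; [exact Logic.I|constructor]. Qed.

Lemma reduced_cons x w :
  reduced (x :: w) <-> projT2 x <> 1_(projT1 x) /\ reduced w /\ starts_outside (projT1 x) w.
Proof.
  unfold reduced; split.
  - intros [ha hf]; inversion hf; subst.
    destruct w as [|z w]; cbn in *; [tauto|].
    destruct ha as [hxz ha]; unfold tag in hxz; auto.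
  - intros [hx [[ha hf] hw]]; split; [|constructor; assumption].
    destruct w as [|z w]; cbn in *; [exact Logic.I|].
    split; [unfold tag; auto|exact ha].
Qed.

Lemma reduced_app u v : reduced (u ++ v) -> reduced u /\ reduced v.
Proof.
  induction u as [|x u IH]; intros h; [split; [apply reduced_nil|exact h]|].
  apply reduced_cons in h as [hx [huv hout]]. destruct (IH huv) as [hu hv].
  split; [|exact hv]. apply reduced_cons; split; [exact hx|split; [exact hu|]].
  destruct u; cbn in *; [exact Logic.I|exact hout].
Qed.

Lemma reduced_app_snoc u y y' v :
  reduced (u ++ [y]) -> reduced (y' :: v) -> projT1 y' = projT1 y ->
  reduced (u ++ y' :: v).
Proof.
  induction u as [|x u IH]; intros hu hv e; [exact hv|].
  apply reduced_cons in hu as [hx [hu hout]].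
  apply reduced_cons; split; [exact hx|split; [apply IH; assumption|]].
  destruct u; cbn in *; [rewrite e|]; exact hout.
Qed.

Lemma scons_one i w : scons i 1_i w = w.
Proof. unfold scons; destruct (excluded_middle_informative _); tauto. Qed.

Lemma scons_nontrivial i m w : m <> 1_i -> scons i m w = mk i m :: w.
Proof. unfold scons; destruct (excluded_middle_informative _); tauto. Qed.

Lemma reduced_scons i m w :
  reduced w -> starts_outside i w -> reduced (scons i m w).
Proof.
  intros hw hout; destruct (classic (m = 1_i)) as [->|hm].
  - rewrite scons_one; exact hw.
  - rewrite scons_nontrivial by exact hm; apply reduced_cons; auto.
Qed.

Lemma head_coord_outside i w : starts_outside i w -> head_coord i w = 1_i.
Proof. destruct w; cbn; [reflexivity|apply coord_diff]. Qed.

Lemma strip_outside i w : starts_outside i w -> strip i w = w.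
Proof. destruct w; cbn; [reflexivity|]. destruct (excluded_middle_informative _); tauto. Qed.

Lemma head_coord_scons i m w : starts_outside i w -> head_coord i (scons i m w) = m.
Proof.
  intros hout; destruct (classic (m = 1_i)) as [->|hm].
  - rewrite scons_one; apply head_coord_outside, hout.
  - rewrite scons_nontrivial by exact hm; apply coord_same.
Qed.

Lemma strip_scons i m w : starts_outside i w -> strip i (scons i m w) = w.
Proof.
  intros hout; destruct (classic (m = 1_i)) as [->|hm].
  - rewrite scons_one; apply strip_outside, hout.
  - rewrite scons_nontrivial by exact hm; cbn.
    destruct (excluded_middle_informative (i = i)); tauto.
Qed.

Lemma strip_reduced i w : reduced w -> reduced (strip i w).
Proof.
  destruct w as [|z w]; [tauto|]; cbn. intros h.
  destruct (excluded_middle_informative _); [|exact h].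
  apply reduced_cons in h; tauto.
Qed.

Lemma starts_outside_strip i w : reduced w -> starts_outside i (strip i w).
Proof.
  destruct w as [|z w]; cbn; [tauto|]. intros h.
  destruct (excluded_middle_informative _) as [<-|n]; [|exact n].
  apply reduced_cons in h; tauto.
Qed.

Lemma scons_split i w : reduced w -> scons i (head_coord i w) (strip i w) = w.
Proof.
  intros h; destruct w as [|z w]; [apply scons_one|]; cbn.
  destruct (excluded_middle_informative (projT1 z = i)) as [<-|n].
  - apply reduced_cons in h as [hz _]. destruct z as [j c].
    rewrite coord_same; apply scons_nontrivial, hz.
  - rewrite coord_diff by exact n; apply scons_one.
Qed.

Lemma lmul_outside i a w : starts_outside i w -> lmul (mk i a) w = scons i a w.
Proof.
  intros h; unfold lmul; cbn. rewrite head_coord_outside, strip_outside, Mone_r by exact h.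
  reflexivity.
Qed.

Lemma lmul_scons i a m w :
  starts_outside i w -> lmul (mk i a) (scons i m w) = scons i (Mop (M i) a m) w.
Proof.
  intros h; unfold lmul; cbn; rewrite head_coord_scons, strip_scons by exact h; reflexivity.
Qed.

Lemma lmul_reduced x w : reduced w -> reduced (lmul x w).
Proof.
  intros h; apply reduced_scons; [apply strip_reduced|apply starts_outside_strip]; exact h.
Qed.

Lemma lmul_one i w : reduced w -> lmul (mk i 1_i) w = w.
Proof. intros h; unfold lmul; cbn; rewrite Mone_l; apply scons_split, h. Qed.

Lemma lmul_lmul i a b w : reduced w ->
  lmul (mk i a) (lmul (mk i b) w) = lmul (mk i (Mop (M i) a b)) w.
Proof.
  intros h. change (lmul (mk i b) w) with (scons i (Mop (M i) b (head_coord i w)) (strip i w)).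
  rewrite lmul_scons by (apply starts_outside_strip, h).
  rewrite Massoc; reflexivity.
Qed.

Definition wmul (u v : list L) : list L := fold_right lmul v u.

Lemma wmul_reduced u v : reduced v -> reduced (wmul u v).
Proof. intros h; induction u; cbn; auto using lmul_reduced. Qed.

Lemma wmul_scons i m w v : reduced v ->
  wmul (scons i m w) v = lmul (mk i m) (wmul w v).
Proof.
  intros h; destruct (classic (m = 1_i)) as [->|hm].
  - rewrite scons_one, lmul_one by (apply wmul_reduced, h); reflexivity.
  - rewrite scons_nontrivial by exact hm; reflexivity.
Qed.

Lemma wmul_lmul x w1 w2 : reduced w1 -> reduced w2 ->
  wmul (lmul x w1) w2 = lmul x (wmul w1 w2).
Proof.
  intros h1 h2; destruct x as [i a].
  rewrite <- (scons_split i h1) at 2.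
  change (lmul (mk i a) w1) with (scons i (Mop (M i) a (head_coord i w1)) (strip i w1)).
  rewrite !wmul_scons, lmul_lmul by auto using wmul_reduced, strip_reduced.
  reflexivity.
Qed.

Lemma wmul_assoc u v w : reduced v -> reduced w ->
  wmul (wmul u v) w = wmul u (wmul v w).
Proof.
  intros hv hw; induction u as [|x u IH]; [reflexivity|].
  change (wmul (lmul x (wmul u v)) w = lmul x (wmul u (wmul v w))).
  rewrite wmul_lmul by auto using wmul_reduced. rewrite IH; reflexivity.
Qed.

Lemma wmul_app u v : reduced (u ++ v) -> wmul u v = u ++ v.
Proof.
  induction u as [|[i a] u IH]; intros h; [reflexivity|].
  apply reduced_cons in h as [ha [huv hout]].
  change (lmul (mk i a) (wmul u v) = mk i a :: u ++ v).
  rewrite IH, lmul_outside, scons_nontrivial by assumption; reflexivity.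
Qed.

Definition rword : Type := {w : list L | reduced w}.

Definition rw_mul (u v : rword) : rword :=
  exist _ (wmul (proj1_sig u) (proj1_sig v)) (wmul_reduced _ (proj2_sig v)).

Definition rw_one : rword := exist _ [] reduced_nil.

Lemma rw_assoc x y z : rw_mul x (rw_mul y z) = rw_mul (rw_mul x y) z.
Proof. apply sig_eq; symmetry; apply wmul_assoc; apply proj2_sig. Qed.

Lemma rw_one_l s : rw_mul rw_one s = s.
Proof. apply sig_eq; reflexivity. Qed.

Definition iota (i : I) (a : M i) : rword :=
  exist _ (scons i a []) (reduced_scons i a reduced_nil Logic.I).

Lemma iota_one i : iota i 1_i = rw_one.
Proof. apply sig_eq; apply scons_one. Qed.

Lemma iota_mul_val i a s : proj1_sig (rw_mul (iota i a) s) = lmul (mk i a) (proj1_sig s).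
Proof. apply wmul_scons, proj2_sig. Qed.

Lemma iota_hom i : hom (Mop (M i)) rw_mul (iota i).
Proof.
  intros a b; apply sig_eq; rewrite iota_mul_val; cbn.
  symmetry; apply lmul_scons; exact Logic.I.
Qed.

Definition rw_strip (i : I) (s : rword) : rword :=
  exist _ (strip i (proj1_sig s)) (strip_reduced i (proj2_sig s)).

Lemma rw_decomp i s :
  exists s1 S, starts_outside i (proj1_sig S) /\ s = rw_mul (iota i s1) S.
Proof.
  pose proof (starts_outside_strip i (proj2_sig s)) as hS.
  exists (head_coord i (proj1_sig s)), (rw_strip i s); split; [exact hS|].
  apply sig_eq; rewrite iota_mul_val; cbn.
  rewrite lmul_outside by exact hS; symmetry; apply scons_split, proj2_sig.
Qed.

Definition proj_word (i : I) (w : list L) : M i :=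
  fold_right (fun x acc => Mop (M i) (coord i x) acc) 1_i w.

Lemma proj_word_scons i j m w :
  proj_word i (scons j m w) = Mop (M i) (coord i (mk j m)) (proj_word i w).
Proof.
  destruct (classic (m = 1_j)) as [->|hm].
  - rewrite scons_one, coord_one, Mone_l; reflexivity.
  - rewrite scons_nontrivial by exact hm; reflexivity.
Qed.

Lemma proj_word_lmul i x w : reduced w ->
  proj_word i (lmul x w) = Mop (M i) (coord i x) (proj_word i w).
Proof.
  intros h; destruct x as [j a]; unfold lmul; cbn.
  rewrite proj_word_scons, coord_mul, <- Massoc, <- proj_word_scons, scons_split by exact h.
  reflexivity.
Qed.

Lemma proj_word_wmul i u v : reduced v ->
  proj_word i (wmul u v) = Mop (M i) (proj_word i u) (proj_word i v).
Proof.
  intros h; induction u as [|x u IH]; [symmetry; apply Mone_l|].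
  change (proj_word i (lmul x (wmul u v))
          = Mop (M i) (Mop (M i) (coord i x) (proj_word i u)) (proj_word i v)).
  rewrite proj_word_lmul, IH, Massoc by (apply wmul_reduced, h); reflexivity.
Qed.

Definition rw_proj (i : I) (s : rword) : M i := proj_word i (proj1_sig s).

Lemma rw_proj_hom i : hom rw_mul (Mop (M i)) (rw_proj i).
Proof. intros u v; apply proj_word_wmul, proj2_sig. Qed.

Lemma rw_proj_iota i a : rw_proj i (iota i a) = a.
Proof.
  unfold rw_proj, iota; cbn [proj1_sig]; rewrite proj_word_scons, coord_same; apply Mone_r.
Qed.

(** * Normal forms in the monoid free product *)

Definition valid (w : list L) : Prop := w <> [] /\ alt w.

Lemma mulw_single_same i a b v : mulw [mk i a] (mk i b :: v) = mk i (Mop (M i) a b) :: v.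
Proof.
  cbn; unfold join; cbn; destruct (excluded_middle_informative (i = i)) as [e|n].
  - rewrite (UIP_refl _ _ e); reflexivity.
  - contradiction.
Qed.

Lemma mulw_single_diff (x y : L) v : projT1 x <> projT1 y -> mulw [x] (y :: v) = x :: y :: v.
Proof. intros h; cbn; unfold join; destruct (excluded_middle_informative _); tauto. Qed.

Lemma mulw_single_mul i a b u :
  mulw [mk i a] (mulw [mk i b] u) = mulw [mk i (Mop (M i) a b)] u.
Proof.
  destruct u as [|[j c] v]; [apply mulw_single_same|].
  destruct (classic (j = i)) as [<-|n].
  - rewrite !mulw_single_same, Massoc; reflexivity.
  - rewrite (mulw_single_diff (mk i b)), mulw_single_same, mulw_single_diff
      by (cbn; congruence).
    reflexivity.
Qed.

Lemma wmul_mulw (u v w : list L) : reduced w -> wmul (mulw u v) w = wmul u (wmul v w).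
Proof.
  intros hw; induction u as [|x [|z u] IH]; [reflexivity| |].
  - destruct v as [|[j b] v]; [reflexivity|]. destruct x as [i a].
    destruct (classic (i = j)) as [<-|n].
    + rewrite mulw_single_same.
      change (lmul (mk i (Mop (M i) a b)) (wmul v w)
              = lmul (mk i a) (lmul (mk i b) (wmul v w))).
      symmetry; apply lmul_lmul, wmul_reduced, hw.
    + rewrite mulw_single_diff by exact n; reflexivity.
  - change (lmul x (wmul (mulw (z :: u) v) w) = lmul x (wmul (z :: u) (wmul v w))).
    rewrite IH; reflexivity.
Qed.

Definition nf (u : list L) : list L := wmul u [].

Lemma nf_reduced (u : list L) : reduced (nf u).
Proof. apply wmul_reduced, reduced_nil. Qed.

Lemma nf_mulw (u v : list L) : nf (mulw u v) = wmul (nf u) (nf v).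
Proof.
  unfold nf; rewrite wmul_mulw, wmul_assoc by auto using reduced_nil, wmul_reduced.
  reflexivity.
Qed.

Lemma sigma_nf (s t : SFP M) : sigma s t -> nf (proj1_sig s) = nf (proj1_sig t).
Proof.
  intros h; apply (h (fun s t => nf (proj1_sig s) = nf (proj1_sig t))).
  - split; [reflexivity|split; [congruence|split; [congruence|]]].
    intros a b c e; cbn; rewrite !nf_mulw, e; split; reflexivity.
  - intros i j; cbn; unfold nf; cbn; rewrite !lmul_one by apply reduced_nil; reflexivity.
Qed.

Lemma sigma_refl (s : SFP M) : sigma s s.
Proof. intros R [refl _] _; apply refl. Qed.

Lemma sigma_sym (s t : SFP M) : sigma s t -> sigma t s.
Proof. intros h R HR HU; apply (proj1 (proj2 HR)), h; assumption. Qed.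

Lemma sigma_trans (s t u : SFP M) : sigma s t -> sigma t u -> sigma s u.
Proof.
  intros h1 h2 R HR HU; apply (proj1 (proj2 (proj2 HR))) with t; [apply h1|apply h2]; assumption.
Qed.

(* [sigma] on bare words; by proof irrelevance the validity proofs do not matter. *)
Definition wsig (u v : list L) : Prop :=
  exists (pu : valid u) (pv : valid v), sigma (exist _ u pu : SFP M) (exist _ v pv).

Lemma wsig_sigma (s t : SFP M) : wsig (proj1_sig s) (proj1_sig t) -> sigma s t.
Proof.
  destruct s as [u pu], t as [v pv]; intros [pu' [pv' h]].
  rewrite (proof_irrelevance _ pu pu'), (proof_irrelevance _ pv pv'); exact h.
Qed.

Lemma wsig_refl (u : list L) : valid u -> wsig u u.
Proof. intros pu; exists pu, pu; apply sigma_refl. Qed.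

Lemma wsig_sym (u v : list L) : wsig u v -> wsig v u.
Proof. intros [pu [pv h]]; exists pv, pu; apply sigma_sym, h. Qed.

Lemma wsig_trans (u v w : list L) : wsig u v -> wsig v w -> wsig u w.
Proof.
  intros [pu [pv h1]] [pv' [pw h2]]; rewrite (proof_irrelevance _ pv' pv) in h2.
  exists pu, pw; exact (sigma_trans h1 h2).
Qed.

Lemma wsig_mull (w u v : list L) : valid w -> wsig u v -> wsig (mulw w u) (mulw w v).
Proof.
  intros pw [pu [pv h]].
  exists (proj2_sig (sfp_mul (exist _ w pw) (exist _ u pu))),
         (proj2_sig (sfp_mul (exist _ w pw) (exist _ v pv))).
  intros R HR HU; apply (proj2 (proj2 (proj2 (proj2 HR)) _ _ (exist _ w pw) (h R HR HU))).
Qed.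

Lemma wsig_mulr (w u v : list L) : valid w -> wsig u v -> wsig (mulw u w) (mulw v w).
Proof.
  intros pw [pu [pv h]].
  exists (proj2_sig (sfp_mul (exist _ u pu) (exist _ w pw))),
         (proj2_sig (sfp_mul (exist _ v pv) (exist _ w pw))).
  intros R HR HU; apply (proj1 (proj2 (proj2 (proj2 HR)) _ _ (exist _ w pw) (h R HR HU))).
Qed.

Lemma wsig_units i j : wsig [mk i 1_i] [mk j 1_j].
Proof. exists (single_ok _), (single_ok _); intros R _ HU; apply (HU i j). Qed.

Lemma wsig_unit_l i u : valid u -> wsig (mulw [mk i 1_i] u) u.
Proof.
  intros pu; destruct u as [|[j c] v]; [destruct pu; congruence|].
  eapply wsig_trans; [apply wsig_mulr, wsig_units; exact pu|].
  rewrite mulw_single_same, Mone_l; apply wsig_refl, pu.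
Qed.

Lemma wsig_unit_r i (x : L) : wsig (mulw [x] [mk i 1_i]) [x].
Proof.
  destruct x as [j a].
  eapply wsig_trans; [apply wsig_mull, wsig_units; apply single_ok|].
  rewrite mulw_single_same, Mone_r; apply wsig_refl, single_ok.
Qed.

(* The empty reduced word stands for the identity, represented by any [1_i0]. *)
Definition canon (i0 : I) (w : list L) : list L :=
  match w with [] => [mk i0 1_i0] | _ => w end.

Lemma canon_valid i0 (w : list L) : reduced w -> valid (canon i0 w).
Proof. intros [hw _]; destruct w; [apply single_ok|split; [discriminate|exact hw]]. Qed.

Lemma nf_canon i0 (w : list L) : reduced w -> nf (canon i0 w) = w.
Proof.
  intros h; destruct w as [|z w]; [apply lmul_one, reduced_nil|].
  unfold nf; rewrite wmul_app, app_nil_r by (rewrite app_nil_r; exact h); reflexivity.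
Qed.

Lemma wsig_canon_scons i0 i m (w : list L) : reduced w -> starts_outside i w ->
  wsig (mulw [mk i m] (canon i0 w)) (canon i0 (scons i m w)).
Proof.
  intros hw hout; destruct (classic (m = 1_i)) as [->|hm].
  - rewrite scons_one; apply wsig_unit_l, canon_valid, hw.
  - pose proof (reduced_scons i m hw hout) as hmw.
    rewrite scons_nontrivial in * by exact hm.
    destruct w as [|[j c] w]; [apply wsig_unit_r|].
    cbn [canon]; rewrite mulw_single_diff by exact (fun e => hout (eq_sym e)).
    apply wsig_refl; exact (canon_valid i0 hmw).
Qed.

Lemma wsig_canon_lmul i0 (x : L) (w : list L) : reduced w ->
  wsig (mulw [x] (canon i0 w)) (canon i0 (lmul x w)).
Proof.
  intros hw; destruct x as [i a].
  rewrite <- (scons_split i hw) at 1.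
  eapply wsig_trans.
  - apply wsig_mull; [apply single_ok|].
    apply wsig_sym, wsig_canon_scons; [apply strip_reduced|apply starts_outside_strip]; exact hw.
  - rewrite mulw_single_mul.
    apply wsig_canon_scons; [apply strip_reduced|apply starts_outside_strip]; exact hw.
Qed.

Lemma wsig_canon_nf i0 (u : list L) : valid u -> wsig u (canon i0 (nf u)).
Proof.
  induction u as [|x [|y u] IH]; intros pu; [destruct pu; congruence| |].
  - eapply wsig_trans; [apply wsig_sym, (wsig_unit_r i0)|].
    apply (wsig_canon_lmul i0 x reduced_nil).
  - destruct pu as [_ [hxy hyu]].
    rewrite <- (mulw_single_diff x y u hxy) at 1.
    eapply wsig_trans.
    { apply wsig_mull; [apply single_ok|apply IH; split; [discriminate|exact hyu]]. }
    apply wsig_canon_lmul, nf_reduced.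
Qed.

Lemma cls_sigma (s t : SFP M) : sigma s t -> cls s = cls t.
Proof.
  intros h; apply sig_eq; cbn.
  apply functional_extensionality; intros u; apply propositional_extensionality.
  split; intros h'; [exact (sigma_trans (sigma_sym h) h')|exact (sigma_trans h h')].
Qed.

Lemma cls_rep (c : MFP M) : cls (rep c) = c.
Proof.
  apply sig_eq; cbn; unfold rep.
  destruct (constructive_indefinite_description _ (proj2_sig c)) as [a h]; cbn.
  symmetry; exact h.
Qed.

Lemma sigma_rep_cls (s : SFP M) : sigma (rep (cls s)) s.
Proof.
  pose proof (f_equal (@proj1_sig _ _) (cls_rep (cls s))) as e; cbn in e.
  apply sigma_sym; rewrite <- e; apply sigma_refl.
Qed.

Lemma mfp_index (c : MFP M) : inhabited I.
Proof.
  destruct (rep c) as [[|x w] [hw _]]; [congruence|exact (inhabits (projT1 x))].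
Qed.

Definition mfp_to_rword (c : MFP M) : rword :=
  exist _ (nf (proj1_sig (rep c))) (nf_reduced _).

Definition rword_to_mfp (i0 : I) (w : rword) : MFP M :=
  cls (exist _ (canon i0 (proj1_sig w)) (canon_valid i0 (proj2_sig w))).

Lemma mfp_to_rwordK i0 (w : rword) : mfp_to_rword (rword_to_mfp i0 w) = w.
Proof.
  apply sig_eq; unfold mfp_to_rword, rword_to_mfp; cbn [proj1_sig].
  rewrite (sigma_nf (sigma_rep_cls _)); apply nf_canon, proj2_sig.
Qed.

Lemma rword_to_mfpK i0 (c : MFP M) : rword_to_mfp i0 (mfp_to_rword c) = c.
Proof.
  rewrite <- (cls_rep c) at 2; apply cls_sigma, wsig_sigma, wsig_sym, wsig_canon_nf.
  apply proj2_sig.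
Qed.

Lemma mfp_to_rword_hom : hom (@mfp_mul I M) rw_mul mfp_to_rword.
Proof.
  intros c d; apply sig_eq; unfold mfp_to_rword, mfp_mul; cbn [proj1_sig rw_mul].
  rewrite (sigma_nf (sigma_rep_cls _)); apply nf_mulw.
Qed.

(** * Right annihilators of reduced words *)

Notation gen := (right_cong_gen rw_mul).

Lemma gen_iota i a Xi s1 t1 :
  (forall s t, r_ann (Mop (M i)) a s t <-> right_cong_gen (Mop (M i)) Xi s t) ->
  r_ann (Mop (M i)) a s1 t1 -> gen (map_pairs (iota i) Xi) (iota i s1) (iota i t1).
Proof. intros HX h; apply (right_cong_gen_map _ _ (iota_hom i)), HX, h. Qed.

Lemma r_ann_iota_pairs (l : rword) i a Xi :
  (forall s t, r_ann (Mop (M i)) a s t <-> right_cong_gen (Mop (M i)) Xi s t) ->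
  forall p, In p (map_pairs (iota i) Xi) ->
  r_ann rw_mul (rw_mul l (iota i a)) (fst p) (snd p).
Proof.
  intros HX p hp; apply in_map_iff in hp as [[q1 q2] [<- hq]]; cbn.
  assert (e : r_ann (Mop (M i)) a q1 q2) by (apply HX; intros R _ HR; apply (HR _ hq)).
  unfold r_ann in *; rewrite <- !rw_assoc, <- !iota_hom, e; reflexivity.
Qed.

Lemma fg_r_ann_snoc_invertible (l : rword) i a e :
  Mop (M i) a e = 1_i -> fg_r_ann rw_mul l -> fg_r_ann (Mop (M i)) a ->
  fg_r_ann rw_mul (rw_mul l (iota i a)).
Proof.
  intros he [Y HY] [Xi HX].
  set (X := map_pairs (iota i) Xi ++ map_pairs (rw_mul (iota i e)) Y).
  pose proof (right_cong_gen_rc rw_mul X) as [_ [gsym [gtrans gcomp]]].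
  (* [e a] fixes every word up to the relations of [M i]: [a (e a s1) = a s1]. *)
  assert (back : forall u, gen X u (rw_mul (iota i e) (rw_mul (iota i a) u))).
  { intros u; destruct (rw_decomp i u) as [d [S [_ ->]]].
    rewrite !rw_assoc, <- !iota_hom; apply gcomp.
    apply (right_cong_gen_incl (X1 := map_pairs (iota i) Xi));
      [intros p hp; apply in_or_app; left; exact hp|].
    apply (gen_iota i HX); unfold r_ann; rewrite !Massoc, he, Mone_l; reflexivity. }
  exists X.
  intros s t; split.
  - intros h; unfold r_ann in h; rewrite <- !rw_assoc in h.
    apply HY, (right_cong_gen_map (rw_mul (iota i e)) id (rw_assoc (iota i e))) in h.
    apply (right_cong_gen_incl X) in h; [|intros p hp; apply in_or_app; right; exact hp].
    apply gtrans with (1 := back s), gtrans with (1 := h), gsym, back.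
  - apply (right_cong_gen_r_ann rw_assoc).
    intros p hp; apply in_app_or in hp as [hp|hp]; [eapply r_ann_iota_pairs; eassumption|].
    apply in_map_iff in hp as [[y1 y2] [<- hy]]; cbn.
    assert (e' : r_ann rw_mul l y1 y2) by (apply HY; intros R _ HR; apply (HR _ hy)).
    unfold r_ann in *.
    rewrite <- !rw_assoc, (rw_assoc (iota i a)), (rw_assoc (iota i a)), <- iota_hom, he,
      iota_one, !rw_one_l; exact e'.
Qed.

Lemma val_snoc_mul (l : rword) i a m (S : rword) :
  reduced (proj1_sig l ++ [mk i a]) -> Mop (M i) a m <> 1_i ->
  starts_outside i (proj1_sig S) ->
  proj1_sig (rw_mul (rw_mul l (iota i a)) (rw_mul (iota i m) S))
  = proj1_sig l ++ mk i (Mop (M i) a m) :: proj1_sig S.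
Proof.
  intros hl ham hS.
  rewrite <- rw_assoc, (rw_assoc (iota i a)), <- iota_hom.
  assert (e : proj1_sig (rw_mul (iota i (Mop (M i) a m)) S)
              = mk i (Mop (M i) a m) :: proj1_sig S)
    by (rewrite iota_mul_val, lmul_outside, scons_nontrivial; first [reflexivity|assumption]).
  change (wmul (proj1_sig l) (proj1_sig (rw_mul (iota i (Mop (M i) a m)) S))
          = proj1_sig l ++ mk i (Mop (M i) a m) :: proj1_sig S).
  rewrite e; apply wmul_app, reduced_app_snoc with (mk i a); [exact hl| |reflexivity].
  pose proof (proj2_sig (rw_mul (iota i (Mop (M i) a m)) S)) as h; rewrite e in h; exact h.
Qed.

Lemma fg_r_ann_snoc_noninvertible (l : rword) i a :
  reduced (proj1_sig l ++ [mk i a]) -> (forall e, Mop (M i) a e <> 1_i) ->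
  fg_r_ann (Mop (M i)) a -> fg_r_ann rw_mul (rw_mul l (iota i a)).
Proof.
  intros hl hinv [Xi HX]. exists (map_pairs (iota i) Xi). intros s t; split.
  - destruct (rw_decomp i s) as [s1 [S [hS ->]]], (rw_decomp i t) as [t1 [T [hT ->]]].
    intros h; apply (f_equal (@proj1_sig _ _)) in h.
    rewrite !val_snoc_mul in h by auto. apply app_inv_head in h.
    pose proof (f_equal (head_coord i) h) as e1; cbn in e1; rewrite !coord_same in e1.
    assert (e2 : S = T) by (apply sig_eq, (f_equal (@tl _) h)); subst T.
    apply (proj2 (proj2 (proj2 (right_cong_gen_rc rw_mul _)))), (gen_iota i HX), e1.
  - apply (right_cong_gen_r_ann rw_assoc); eapply r_ann_iota_pairs; eassumption.
Qed.

Lemma FRE_rword : (forall i, FRE (Mop (M i))) -> FRE rw_mul.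
Proof.
  intros HF [l hl]; revert hl; induction l as [|[i a] l IH] using rev_ind; intros hl.
  - exists []; intros s t; split.
    + intros h; assert (e : s = t) by (apply sig_eq, (f_equal (@proj1_sig _ _) h)); subst t.
      apply (proj1 (right_cong_gen_rc rw_mul [])).
    + intros h; unfold r_ann; f_equal; apply (h eq); [|intros _ []].
      repeat split; [congruence..|]. intros u v w ->; reflexivity.
  - destruct (reduced_app _ _ hl) as [hl' ha].
    apply reduced_cons in ha as [ha _].
    assert (hsnoc : exist (fun w => reduced w) (l ++ [mk i a]) hl
                    = rw_mul (exist _ l hl') (iota i a)).
    { apply sig_eq; cbn; rewrite scons_nontrivial by exact ha; symmetry; apply wmul_app, hl. }
    enough (h : fg_r_ann rw_mul (rw_mul (exist _ l hl') (iota i a)))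
      by (rewrite <- hsnoc in h; exact h).
    destruct (classic (exists e, Mop (M i) a e = 1_i)) as [[e he]|hinv].
    + eapply fg_r_ann_snoc_invertible; [exact he|apply IH|apply HF].
    + apply fg_r_ann_snoc_noninvertible; [exact hl|intros e he; eauto|apply HF].
Qed.

End ReducedWords.

Theorem mainTheorem6 (I : Type) (M : I -> Monoid) :
  FRE (@mfp_mul I M) <-> (forall i : I, FRE (Mop (M i))).
Proof.
  destruct (classic (inhabited I)) as [[i0] | hI].
  - rewrite (FRE_iso (rword_to_mfpK (M := M) i0) (mfp_to_rwordK i0)
                      (@mfp_to_rword_hom I M)).
    split; [|apply FRE_rword].
    intros F i.
    exact (FRE_retract (Massoc (M i)) (iota_hom M i) (rw_proj_hom (M := M) i)
                       (rw_proj_iota M i) F).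
  - split; intros _; [intros i | intros c]; exfalso; apply hI.
    + exact (inhabits i).
    + exact (mfp_index c).
Qed.
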